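(* Let $E_{\mathcal H}>1$ be a fixed real number. Each of the following kernels satisfies assumptions (K0), (K1), (K2), (K3): (a) the Gaussian kernel $K(x)=e^{-x^2/2}/\sqrt{2\pi}$; (b) the rectangular kernel $K(x)=\mathbf 1_{[-1,1]}(x)/2$; (c) the Epanechnikov kernel $K(x)=(3/4)(1-x^2)\mathbf 1_{[-1,1]}(x)$; (d) the biweight kernel $K(x)=(15/16)(1-x^2)^2\mathbf 1_{[-1,1]}(x)$.
   Context: $\|\cdot\|$ and $\langle\cdot,\cdot\rangle$ denote the $L^2(\mathbb R)$ norm and inner product with respect to Lebesgue measure; $K(x\,\cdot)$ denotes $u\mapsto K(xu)$. For $x>0$ define $\phi(x)=1+\frac1x-2\frac{\langle K,K(x\,\cdot)\rangle}{\|K\|^2}$ (equivalently $\phi(x)=\|K\|^{-2}\|K-K_x\|^2$ with $K_x=K(\cdot/x)/x$). The assumptions are: (K0) $\int|K|=1$, $\|K\|<\infty$, and $\langle K,K(x\,\cdot)\rangle/\|K\|^2\ge1$ for all $0\le x\le1$; (K1) the function $\phi$ is bounded from below over $[E_{\mathcal H},+\infty)$; (K2) for every $0<\mu<1$, the function $x\mapsto\phi(x)-\mu/x$ tends to $+\infty$ as $x\to0$ and is decreasing in some neighborhood of $0$; (K3) for every $0<\mu<1$, the function $x\mapsto\phi(x)+\mu/x$ is increasing on $[2,\infty)$. *)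

From HB Require Import structures.
From mathcomp Require Import all_boot all_order all_algebra.
From mathcomp Require Import all_classical all_reals all_analysis.
Set Implicit Arguments. Unset Strict Implicit. Unset Printing Implicit Defensive.
Import Order.TTheory GRing.Theory Num.Theory.
Import numFieldNormedType.Exports.
Local Open Scope classical_set_scope.
Local Open Scope ring_scope.

Section Kernels.
Variable R : realType.

Definition L2inner (f g : R -> R) : R :=
  Rintegral (@lebesgue_measure R) setT (fun u => f u * g u).

Definition L2norm2 (K : R -> R) : R := L2inner K K.

Definition phi (K : R -> R) (x : R) : R :=
  1 + x^-1 - 2 * (L2inner K (fun u => K (x * u)) / L2norm2 K).

Definition assumption_K0 (K : R -> R) : Prop :=
  [/\ (\int[@lebesgue_measure R]_u (`|K u|)%:E = 1)%E,
      (\int[@lebesgue_measure R]_u ((K u) ^+ 2)%:E < +oo)%E &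
      forall x : R, 0 <= x <= 1 ->
        1 <= L2inner K (fun u => K (x * u)) / L2norm2 K].

Definition assumption_K1 (EH : R) (K : R -> R) : Prop :=
  exists m : R, forall x : R, EH <= x -> m <= phi K x.

Definition assumption_K2 (K : R -> R) : Prop :=
  forall mu : R, 0 < mu < 1 ->
    (phi K x - mu / x) @[x --> 0^'+] --> +oo /\
    exists2 d : R, 0 < d &
      forall x y : R, 0 < x -> x < y -> y < d ->
        phi K y - mu / y < phi K x - mu / x.

Definition assumption_K3 (K : R -> R) : Prop :=
  forall mu : R, 0 < mu < 1 ->
    forall x y : R, 2 <= x -> x < y ->
      phi K x + mu / x < phi K y + mu / y.

Definition kernel_assumptions (EH : R) (K : R -> R) : Prop :=
  [/\ assumption_K0 K, assumption_K1 EH K, assumption_K2 K & assumption_K3 K].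

Definition gaussian_kernel (x : R) : R :=
  expR (- (x ^+ 2) / 2) / Num.sqrt (2 * pi).

Definition rectangular_kernel (x : R) : R :=
  if `|x| <= 1 then 2^-1 else 0.

Definition epanechnikov_kernel (x : R) : R :=
  if `|x| <= 1 then 3 / 4 * (1 - x ^+ 2) else 0.

Definition biweight_kernel (x : R) : R :=
  if `|x| <= 1 then 15 / 16 * (1 - x ^+ 2) ^+ 2 else 0.

End Kernels.

From HB Require Import structures.
From mathcomp Require Import all_boot all_order all_algebra.
From mathcomp Require Import all_classical all_reals all_analysis.
From mathcomp Require Import ring lra measurable_realfun normal_distribution.
Import Order.TTheory GRing.Theory Num.Theory.
Import numFieldNormedType.Exports.
Local Open Scope classical_set_scope.
Local Open Scope ring_scope.

(* For the three compactly supported kernels K = p 1_[-1,1] with p polynomial,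
   <K, K(x .)> is the integral of p(u) p(xu) over [-min(1,1/x), min(1,1/x)], so phi
   is an explicit polynomial in x on (0,1] and in 1/x on [1,oo).  For the Gaussian
   kernel, K(u) K(xu) is a centred Gaussian density of variance 1/(1+x^2) up to a
   constant, whence <K, K(x .)> / ||K||^2 = sqrt 2 / sqrt (1 + x^2).  In every case
   phi x = 1/x + h x on (0,1] with h bounded below and Lipschitz from above, which
   gives (K2), and phi y - phi x >= 1/x - 1/y for 2 <= x < y, which gives (K3). *)

Section TruncatedIntegrals.
Context {R : realType}.
Local Notation mu := (@lebesgue_measure R).

Lemma integral_truncated_primitive (f q F : R -> R) (a : R) : 0 < a ->
  (forall x, is_derive x (1 : R) F (q x)) -> (forall x, derivable q x 1) ->
  (forall u, `|u| <= a -> f u = q u) -> (forall u, a < `|u| -> f u = 0) ->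
  (\int[mu]_u (f u)%:E = (F a - F (- a))%:E)%E.
Proof.
move=> a0 dF dq fq f0.
have cq : continuous q.
  by move=> x; apply: differentiable_continuous; apply/derivable1_diffP.
have cF : continuous F.
  by move=> x; apply: differentiable_continuous; apply/derivable1_diffP; apply: ex_derive.
have -> : (\int[mu]_u (f u)%:E = \int[mu]_(u in `[(- a)%R, a]) (q u)%:E)%E.
  rewrite [RHS]integral_mkcond; apply: eq_integral => u _.
  rewrite /patch; case: ifPn => [|/negP]; rewrite inE /= in_itv /=.
    by move=> ua; rewrite fq // ler_norml.
  by rewrite -ler_norml => /negP; rewrite -ltNge => /f0 ->.
rewrite (@continuous_FTC2 _ q F) //.
- lra.
- exact: continuous_subspaceT.
- split; first by move=> x _; apply: ex_derive.
  + by apply: cvg_at_right_filter; apply: cF.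
  + by apply: cvg_at_left_filter; apply: cF.
- by move=> x _; rewrite derive1E derive_val.
Qed.

Lemma Rintegral_truncated_primitive (f q F : R -> R) (a : R) : 0 < a ->
  (forall x, is_derive x (1 : R) F (q x)) -> (forall x, derivable q x 1) ->
  (forall u, `|u| <= a -> f u = q u) -> (forall u, a < `|u| -> f u = 0) ->
  Rintegral mu setT f = F a - F (- a).
Proof. by move=> *; rewrite /Rintegral (@integral_truncated_primitive f q F a). Qed.

End TruncatedIntegrals.

Section Criteria.
Context {R : realType}.
Implicit Types (K f h : R -> R) (x y c m : R).

Lemma pole_cvgry f h (c C : R) : 0 < c ->
  (forall x, 0 < x <= 1 -> f x = c / x + h x) ->
  (forall x, 0 < x <= 1 -> - C <= h x) ->
  f x @[x --> 0^'+] --> +oo.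
Proof.
move=> c0 fE hC; apply/cvgryPge => A.
pose M := `|A| + `|C| + 1.
have M0 : 0 < M by rewrite /M; have := normr_ge0 A; have := normr_ge0 C; lra.
near=> y.
have y0 : 0 < y by near: y; exact: nbhs_right_gt.
have y1 : y <= 1 by near: y; apply: nbhs_right_ltW; exact: ltr01.
have yM : y < c / M by near: y; apply: nbhs_right_lt; exact: divr_gt0.
have Mc : M < c / y by rewrite ltr_pdivlMr // mulrC -ltr_pdivlMr.
have hy : - C <= h y by apply: hC; rewrite y0 y1.
rewrite fE ?y0 //; have := ler_norm A; have := ler_norm C.
rewrite /M in Mc; lra.
Unshelve. all: end_near.
Qed.

Lemma pole_decreasing_near0 f h (c L : R) : 0 < c -> 0 <= L ->
  (forall x, 0 < x <= 1 -> f x = c / x + h x) ->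
  (forall x y, 0 < x -> x < y -> y <= 1 -> h y - h x <= L * (y - x)) ->
  exists2 d, 0 < d & forall x y, 0 < x -> x < y -> y < d -> f y < f x.
Proof.
move=> c0 L0 fE hL; pose d := c / (L + 1 + c).
have d0 : 0 < d by rewrite divr_gt0 //; lra.
have d1 : d < 1 by rewrite ltr_pdivrMr; lra.
have dc : d * (L + 1) <= c.
  by rewrite mulrAC ler_pdivrMr ?ler_pM2l //; lra.
exists d => // x y x0 xy yd.
have xy0 : 0 < x * y by rewrite mulr_gt0 //; lra.
have Lxy : L * (x * y) < c.
  have xyd : x * y <= d by nra.
  have : L * (x * y) <= L * d by rewrite ler_wpM2l.
  nra.
have gap : L * (y - x) < c / x - c / y.
  have -> : c / x - c / y = c * (y - x) / (x * y).
    by field; apply/andP; split; apply: lt0r_neq0; lra.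
  rewrite ltr_pdivlMr //; nra.
rewrite !fE; [|lra..]; have := hL x y x0 xy (ltW (lt_trans yd d1)); lra.
Qed.

Lemma assumption_K1_ge1 (EH m : R) K : 1 <= EH ->
  (forall x, 1 <= x -> m <= phi K x) -> assumption_K1 EH K.
Proof. by move=> EH1 lb; exists m => x EHx; apply: lb; exact: le_trans EHx. Qed.

Lemma assumption_K2_pole K h (L C : R) : 0 <= L ->
  (forall x, 0 < x <= 1 -> phi K x = x^-1 + h x) ->
  (forall x y, 0 < x -> x < y -> y <= 1 -> h y - h x <= L * (y - x)) ->
  (forall x, 0 < x <= 1 -> - C <= h x) -> assumption_K2 K.
Proof.
move=> L0 phiE hL hC m /andP[m0 m1].
have fE x : 0 < x <= 1 -> phi K x - m / x = (1 - m) / x + h x.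
  move=> hx; rewrite phiE //; field.
  by case/andP: hx => x0 _; exact: lt0r_neq0.
have m'0 : 0 < 1 - m by lra.
split; first exact: (@pole_cvgry _ h _ C m'0 fE hC).
exact: (@pole_decreasing_near0 _ h _ L m'0 L0 fE hL).
Qed.

Lemma assumption_K3_slope K :
  (forall x y, 2 <= x -> x < y -> x^-1 - y^-1 <= phi K y - phi K x) ->
  assumption_K3 K.
Proof.
move=> slope m /andP[m0 m1] x y x2 xy.
have := slope x y x2 xy.
have yx : y^-1 < x^-1 by rewrite ltf_pV2 ?posrE; lra.
have : m * (x^-1 - y^-1) < x^-1 - y^-1 by rewrite gtr_pMl; lra.
lra.
Qed.

Lemma inv_ge1 x : 1 <= x -> 0 < x^-1 <= 1.
Proof.
move=> x1; rewrite invr_gt0 invr_le1 ?unitf_gt0 ?andbT; lra.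
Qed.

Lemma inv_lt_le_half x y : 2 <= x -> x < y ->
  [/\ 0 < y^-1, y^-1 < x^-1 & x^-1 <= 2^-1].
Proof.
move=> x2 xy.
split; first by rewrite invr_gt0; lra.
  by rewrite ltf_pV2 ?posrE; lra.
by rewrite lef_pV2 ?posrE; lra.
Qed.

Lemma L2norm2_dilate1 K : L2norm2 K = L2inner K (fun u => K (1 * u)).
Proof. by rewrite /L2norm2; congr L2inner; apply: funext => u; rewrite mul1r. Qed.

End Criteria.

Section TruncatedKernel.
Context {R : realType} {p K : R -> R}.
Hypothesis K_trunc : forall u, K u = if `|u| <= 1 then p u else 0.
Local Notation mu := (@lebesgue_measure R).

Lemma L2inner_dilate_le1 x (F : R -> R) : 0 <= x <= 1 ->
  (forall y, is_derive y (1 : R) F (p y * p (x * y))) ->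
  (forall y, derivable (fun u => p u * p (x * u)) y 1) ->
  L2inner K (fun u => K (x * u)) = F 1 - F (- 1).
Proof.
move=> /andP[x0 x1] dF dq.
apply: (@Rintegral_truncated_primitive _ _ (fun u => p u * p (x * u))) => // u u1.
  rewrite !K_trunc u1 normrM (ger0_norm x0).
  by have -> : x * `|u| <= 1 by rewrite -[1]mul1r ler_pM.
by rewrite K_trunc leNgt u1 mul0r.
Qed.

Lemma L2inner_dilate_ge1 x (F : R -> R) : 1 <= x ->
  (forall y, is_derive y (1 : R) F (p y * p (x * y))) ->
  (forall y, derivable (fun u => p u * p (x * u)) y 1) ->
  L2inner K (fun u => K (x * u)) = F x^-1 - F (- x^-1).
Proof.
move=> x1 dF dq; have x0 : 0 < x by lra.
have xK : x * x^-1 = 1 by rewrite mulfV ?lt0r_neq0.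
apply: (@Rintegral_truncated_primitive _ _ (fun u => p u * p (x * u))) => //.
- by rewrite invr_gt0.
- move=> u ux; rewrite !K_trunc normrM (gtr0_norm x0).
  have -> : x * `|u| <= 1 by rewrite -xK ler_pM2l.
  have -> // : `|u| <= 1.
  by apply: (le_trans ux); rewrite invr_le1 ?unitf_gt0.
- move=> u ux; rewrite !K_trunc normrM (gtr0_norm x0).
  have -> : x * `|u| <= 1 = false by apply/negbTE; rewrite -ltNge -xK ltr_pM2l.
  by rewrite mulr0.
Qed.

Lemma integral_norm_truncated (F : R -> R) : (forall u, `|u| <= 1 -> 0 <= p u) ->
  (forall y, is_derive y (1 : R) F (p y)) -> (forall y, derivable p y 1) ->
  (\int[mu]_u (`|K u|)%:E = (F 1 - F (- 1))%:E)%E.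
Proof.
move=> p0 dF dp; apply: (@integral_truncated_primitive _ _ p) => // u u1.
  by rewrite K_trunc u1 ger0_norm // p0.
by rewrite K_trunc leNgt u1 normr0.
Qed.

Lemma integral_sqr_truncated_lty (F : R -> R) :
  (forall y, is_derive y (1 : R) F (p y ^+ 2)) ->
  (forall y, derivable (fun u => p u ^+ 2) y 1) ->
  (\int[mu]_u ((K u) ^+ 2)%:E < +oo)%E.
Proof.
move=> dF dp; rewrite (@integral_truncated_primitive _ _ (fun u => p u ^+ 2) F 1) ?ltry //.
  by move=> u u1; rewrite K_trunc u1.
by move=> u u1; rewrite K_trunc leNgt u1 expr0n.
Qed.

End TruncatedKernel.

Ltac derive_poly := apply: trigger_derive;
  rewrite /GRing.scale /= /GRing.scale /=; field.

Section Rectangular.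
Variable R : realType.

Definition rectangular_poly (u : R) : R := 2^-1.

Lemma rectangular_kernelE u :
  rectangular_kernel u = if `|u| <= 1 then rectangular_poly u else 0.
Proof. by []. Qed.

Lemma is_derive_rectangular_overlap (x : R) : forall y,
  is_derive y (1 : R) (fun u => u / 4) (rectangular_poly y * rectangular_poly (x * y)).
Proof. by move=> y; rewrite /rectangular_poly; derive_poly. Qed.

Lemma derivable_rectangular_product (x y : R) :
  derivable (fun u => rectangular_poly u * rectangular_poly (x * u)) y 1.
Proof. by rewrite /rectangular_poly; apply: ex_derive. Qed.

Lemma rectangular_inner_le1 (x : R) : 0 <= x <= 1 ->
  L2inner (@rectangular_kernel R) (fun u => rectangular_kernel (x * u)) = 1 / 2.
Proof.
move=> x01; rewrite (L2inner_dilate_le1 rectangular_kernelE x _ x01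
  (is_derive_rectangular_overlap x) (derivable_rectangular_product x)).
by field.
Qed.

Lemma rectangular_inner_ge1 (x : R) : 1 <= x ->
  L2inner (@rectangular_kernel R) (fun u => rectangular_kernel (x * u)) = 1 / 2 * x^-1.
Proof.
move=> x1; rewrite (L2inner_dilate_ge1 rectangular_kernelE x _ x1
  (is_derive_rectangular_overlap x) (derivable_rectangular_product x)).
by field; apply: lt0r_neq0; lra.
Qed.

Lemma rectangular_L2norm2 : L2norm2 (@rectangular_kernel R) = 1 / 2.
Proof. by rewrite L2norm2_dilate1 rectangular_inner_le1 ?ler01 ?lexx. Qed.

Lemma rectangular_phi_le1 (x : R) : 0 < x <= 1 ->
  phi (@rectangular_kernel R) x = x^-1 + (- 1).
Proof.
move=> /andP[x0 x1].
rewrite /phi rectangular_L2norm2 rectangular_inner_le1 ?(ltW x0) ?x1 //.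
by field; exact: lt0r_neq0.
Qed.

Lemma rectangular_phi_ge1 (x : R) : 1 <= x ->
  phi (@rectangular_kernel R) x = 1 - x^-1.
Proof.
move=> x1; rewrite /phi rectangular_L2norm2 rectangular_inner_ge1 //.
by field; apply: lt0r_neq0; lra.
Qed.

Lemma rectangular_assumption_K0 : assumption_K0 (@rectangular_kernel R).
Proof.
split.
- have dF y : is_derive y (1 : R) (fun u => u / 2) (rectangular_poly y).
    by rewrite /rectangular_poly; derive_poly.
  rewrite (integral_norm_truncated rectangular_kernelE _ _ dF).
  + by congr EFin; field.
  + by move=> u _; rewrite /rectangular_poly.
  + by move=> y; rewrite /rectangular_poly; apply: ex_derive.
- have dF y : is_derive y (1 : R) (fun u => u / 4) (rectangular_poly y ^+ 2).
    by rewrite /rectangular_poly; derive_poly.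
  apply: (integral_sqr_truncated_lty rectangular_kernelE _ dF).
  by move=> y; rewrite /rectangular_poly; apply: ex_derive.
- by move=> x x01; rewrite rectangular_L2norm2 rectangular_inner_le1 ?divff.
Qed.

Lemma rectangular_assumptions (EH : R) : 1 <= EH ->
  kernel_assumptions EH (@rectangular_kernel R).
Proof.
move=> EH1; split.
- exact: rectangular_assumption_K0.
- apply: (@assumption_K1_ge1 _ _ (-1)) => // x x1.
  by rewrite rectangular_phi_ge1 //; case/andP: (inv_ge1 _ x1) => p0 p1; lra.
- apply: (@assumption_K2_pole _ _ (fun=> -1) 0 1) => //.
  + exact: rectangular_phi_le1.
  + by move=> x y x0 xy y1; rewrite subrr mul0r.
- apply: assumption_K3_slope => x y x2 xy.
  by rewrite !rectangular_phi_ge1; lra.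
Qed.

End Rectangular.

Section Epanechnikov.
Variable R : realType.

Definition epanechnikov_poly (u : R) := 3 / 4 * (1 - u ^+ 2).

Lemma epanechnikov_kernelE u :
  epanechnikov_kernel u = if `|u| <= 1 then epanechnikov_poly u else 0.
Proof. by []. Qed.

Definition epanechnikov_overlap (x u : R) :=
  9 / 16 * (u - (1 + x ^+ 2) * u ^+ 3 / 3 + x ^+ 2 * u ^+ 5 / 5).

Lemma is_derive_epanechnikov_overlap x : forall y, is_derive y (1 : R)
  (epanechnikov_overlap x) (epanechnikov_poly y * epanechnikov_poly (x * y)).
Proof. by move=> y; rewrite /epanechnikov_overlap /epanechnikov_poly; derive_poly. Qed.

Lemma derivable_epanechnikov_product (x y : R) :
  derivable (fun u => epanechnikov_poly u * epanechnikov_poly (x * u)) y 1.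
Proof. by rewrite /epanechnikov_poly; apply: ex_derive. Qed.

Lemma epanechnikov_inner_le1 x : 0 <= x <= 1 ->
  L2inner (@epanechnikov_kernel R) (fun u => epanechnikov_kernel (x * u)) =
  3 / 4 - 3 / 20 * x ^+ 2.
Proof.
move=> x01; rewrite (L2inner_dilate_le1 epanechnikov_kernelE x _ x01
  (is_derive_epanechnikov_overlap x) (derivable_epanechnikov_product x)).
by rewrite /epanechnikov_overlap; field.
Qed.

Lemma epanechnikov_inner_ge1 x : 1 <= x ->
  L2inner (@epanechnikov_kernel R) (fun u => epanechnikov_kernel (x * u)) =
  3 / 4 * x^-1 - 3 / 20 * x^-1 ^+ 3.
Proof.
move=> x1; rewrite (L2inner_dilate_ge1 epanechnikov_kernelE x _ x1
  (is_derive_epanechnikov_overlap x) (derivable_epanechnikov_product x)).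
by rewrite /epanechnikov_overlap; field; apply: lt0r_neq0; lra.
Qed.

Lemma epanechnikov_L2norm2 : L2norm2 (@epanechnikov_kernel R) = 3 / 5.
Proof. by rewrite L2norm2_dilate1 epanechnikov_inner_le1 ?ler01 ?lexx //; field. Qed.

Lemma epanechnikov_phi_le1 x : 0 < x <= 1 ->
  phi (@epanechnikov_kernel R) x = x^-1 + (x ^+ 2 / 2 - 3 / 2).
Proof.
move=> /andP[x0 x1].
rewrite /phi epanechnikov_L2norm2 epanechnikov_inner_le1 ?(ltW x0) ?x1 //.
by field; exact: lt0r_neq0.
Qed.

Lemma epanechnikov_phi_ge1 x : 1 <= x ->
  phi (@epanechnikov_kernel R) x = 1 - 3 / 2 * x^-1 + 1 / 2 * x^-1 ^+ 3.
Proof.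
move=> x1; rewrite /phi epanechnikov_L2norm2 epanechnikov_inner_ge1 //.
by field; apply: lt0r_neq0; lra.
Qed.

Lemma epanechnikov_assumption_K0 : assumption_K0 (@epanechnikov_kernel R).
Proof.
split.
- have dF y : is_derive y (1 : R) (fun u => 3 / 4 * (u - u ^+ 3 / 3))
      (epanechnikov_poly y) by rewrite /epanechnikov_poly; derive_poly.
  rewrite (integral_norm_truncated epanechnikov_kernelE _ _ dF).
  + by congr EFin; field.
  + move=> u u1; rewrite /epanechnikov_poly mulr_ge0 // subr_ge0.
    by rewrite -[u ^+ 2]ger0_norm ?sqr_ge0 // normrX expr_le1.
  + by move=> y; rewrite /epanechnikov_poly; apply: ex_derive.
- have dF y : is_derive y (1 : R)
      (fun u => 9 / 16 * (u - 2 * u ^+ 3 / 3 + u ^+ 5 / 5))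
      (epanechnikov_poly y ^+ 2) by rewrite /epanechnikov_poly; derive_poly.
  apply: (integral_sqr_truncated_lty epanechnikov_kernelE _ dF).
  by move=> y; rewrite /epanechnikov_poly; apply: ex_derive.
- move=> x /andP[x0 x1].
  rewrite epanechnikov_L2norm2 epanechnikov_inner_le1 ?x0 ?x1 //.
  have : x ^+ 2 <= 1 by rewrite expr_le1.
  by rewrite ler_pdivlMr //; lra.
Qed.

Lemma epanechnikov_phi_slope x y : 2 <= x -> x < y ->
  x^-1 - y^-1 <= phi (@epanechnikov_kernel R) y - phi (@epanechnikov_kernel R) x.
Proof.
move=> x2 xy; rewrite !epanechnikov_phi_ge1; [|lra|lra].
case: (inv_lt_le_half _ _ x2 xy) => q0 qp p2.
set p := x^-1 in qp p2 *; set q := y^-1 in q0 qp *.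
have : p ^+ 2 + p * q + q ^+ 2 <= 3 / 4 by nra.
have -> : p ^+ 3 = q ^+ 3 + (p - q) * (p ^+ 2 + p * q + q ^+ 2) by ring.
nra.
Qed.

Lemma epanechnikov_assumptions (EH : R) : 1 <= EH ->
  kernel_assumptions EH (@epanechnikov_kernel R).
Proof.
move=> EH1; split.
- exact: epanechnikov_assumption_K0.
- apply: (@assumption_K1_ge1 _ _ (-1)) => // x x1.
  rewrite epanechnikov_phi_ge1 //; case/andP: (inv_ge1 _ x1) => p0 p1.
  have : 0 <= x^-1 ^+ 3 by rewrite exprn_ge0 // ltW.
  lra.
- apply: (@assumption_K2_pole _ _ (fun x => x ^+ 2 / 2 - 3 / 2) 1 (3 / 2)) => //.
  + exact: epanechnikov_phi_le1.
  + move=> x y x0 xy y1.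
    have : (y - x) * (y + x) <= (y - x) * 2 by rewrite ler_pM2l; lra.
    lra.
  + by move=> x _; have := sqr_ge0 x; lra.
- exact: assumption_K3_slope epanechnikov_phi_slope.
Qed.

End Epanechnikov.

Section Biweight.
Variable R : realType.

Definition biweight_poly (u : R) := 15 / 16 * (1 - u ^+ 2) ^+ 2.

Lemma biweight_kernelE u :
  biweight_kernel u = if `|u| <= 1 then biweight_poly u else 0.
Proof. by []. Qed.

Definition biweight_overlap (x u : R) := 225 / 256 * (u - (2 + 2 * x ^+ 2) * u ^+ 3 / 3
  + (1 + 4 * x ^+ 2 + x ^+ 4) * u ^+ 5 / 5 - (2 * x ^+ 2 + 2 * x ^+ 4) * u ^+ 7 / 7
  + x ^+ 4 * u ^+ 9 / 9).

Lemma is_derive_biweight_overlap x : forall y, is_derive y (1 : R)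
  (biweight_overlap x) (biweight_poly y * biweight_poly (x * y)).
Proof. by move=> y; rewrite /biweight_overlap /biweight_poly; derive_poly. Qed.

Lemma derivable_biweight_product (x y : R) :
  derivable (fun u => biweight_poly u * biweight_poly (x * u)) y 1.
Proof. by rewrite /biweight_poly; apply: ex_derive. Qed.

Lemma biweight_inner_le1 x : 0 <= x <= 1 ->
  L2inner (@biweight_kernel R) (fun u => biweight_kernel (x * u)) =
  15 / 16 - 15 / 56 * x ^+ 2 + 5 / 112 * x ^+ 4.
Proof.
move=> x01; rewrite (L2inner_dilate_le1 biweight_kernelE x _ x01
  (is_derive_biweight_overlap x) (derivable_biweight_product x)).
by rewrite /biweight_overlap; field.
Qed.

Lemma biweight_inner_ge1 x : 1 <= x ->
  L2inner (@biweight_kernel R) (fun u => biweight_kernel (x * u)) =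
  15 / 16 * x^-1 - 15 / 56 * x^-1 ^+ 3 + 5 / 112 * x^-1 ^+ 5.
Proof.
move=> x1; rewrite (L2inner_dilate_ge1 biweight_kernelE x _ x1
  (is_derive_biweight_overlap x) (derivable_biweight_product x)).
by rewrite /biweight_overlap; field; apply: lt0r_neq0; lra.
Qed.

Lemma biweight_L2norm2 : L2norm2 (@biweight_kernel R) = 5 / 7.
Proof. by rewrite L2norm2_dilate1 biweight_inner_le1 ?ler01 ?lexx //; field. Qed.

Lemma biweight_phi_le1 x : 0 < x <= 1 ->
  phi (@biweight_kernel R) x = x^-1 + (1 - (21 - 6 * x ^+ 2 + x ^+ 4) / 8).
Proof.
move=> /andP[x0 x1].
rewrite /phi biweight_L2norm2 biweight_inner_le1 ?(ltW x0) ?x1 //.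
by field; exact: lt0r_neq0.
Qed.

Lemma biweight_phi_ge1 x : 1 <= x ->
  phi (@biweight_kernel R) x =
  1 - 13 / 8 * x^-1 + 3 / 4 * x^-1 ^+ 3 - 1 / 8 * x^-1 ^+ 5.
Proof.
move=> x1; rewrite /phi biweight_L2norm2 biweight_inner_ge1 //.
by field; apply: lt0r_neq0; lra.
Qed.

Lemma biweight_assumption_K0 : assumption_K0 (@biweight_kernel R).
Proof.
split.
- have dF y : is_derive y (1 : R)
      (fun u => 15 / 16 * (u - 2 * u ^+ 3 / 3 + u ^+ 5 / 5))
      (biweight_poly y) by rewrite /biweight_poly; derive_poly.
  rewrite (integral_norm_truncated biweight_kernelE _ _ dF).
  + by congr EFin; field.
  + by move=> u _; rewrite /biweight_poly mulr_ge0 ?sqr_ge0.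
  + by move=> y; rewrite /biweight_poly; apply: ex_derive.
- have dF y : is_derive y (1 : R) (fun u => 225 / 256 *
      (u - 4 * u ^+ 3 / 3 + 6 * u ^+ 5 / 5 - 4 * u ^+ 7 / 7 + u ^+ 9 / 9))
      (biweight_poly y ^+ 2) by rewrite /biweight_poly; derive_poly.
  apply: (integral_sqr_truncated_lty biweight_kernelE _ dF).
  by move=> y; rewrite /biweight_poly; apply: ex_derive.
- move=> x /andP[x0 x1].
  rewrite biweight_L2norm2 biweight_inner_le1 ?x0 ?x1 //.
  have x2 : x ^+ 2 <= 1 by rewrite expr_le1.
  have -> : x ^+ 4 = x ^+ 2 * x ^+ 2 by rewrite -exprD.
  by rewrite ler_pdivlMr //; nra.
Qed.

Lemma biweight_phi_slope x y : 2 <= x -> x < y ->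
  x^-1 - y^-1 <= phi (@biweight_kernel R) y - phi (@biweight_kernel R) x.
Proof.
move=> x2 xy; rewrite !biweight_phi_ge1; [|lra|lra].
case: (inv_lt_le_half _ _ x2 xy) => q0 qp p2.
set p := x^-1 in qp p2 *; set q := y^-1 in q0 qp *.
pose S3 := p ^+ 2 + p * q + q ^+ 2.
pose S5 := p ^+ 4 + p ^+ 3 * q + p ^+ 2 * q ^+ 2 + p * q ^+ 3 + q ^+ 4.
have S3le : S3 <= 3 / 4 by rewrite /S3; nra.
have S5ge : 0 <= S5 by rewrite /S5 !addr_ge0 ?mulr_ge0 ?exprn_ge0 //; lra.
have -> : p ^+ 3 = q ^+ 3 + (p - q) * S3 by rewrite /S3; ring.
have -> : p ^+ 5 = q ^+ 5 + (p - q) * S5 by rewrite /S5; ring.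
have : 0 <= (p - q) * (5 / 8 - 3 / 4 * S3 + 1 / 8 * S5) by rewrite mulr_ge0 //; lra.
lra.
Qed.

Lemma biweight_assumptions (EH : R) : 1 <= EH ->
  kernel_assumptions EH (@biweight_kernel R).
Proof.
move=> EH1; split.
- exact: biweight_assumption_K0.
- apply: (@assumption_K1_ge1 _ _ (-1)) => // x x1.
  rewrite biweight_phi_ge1 //; case/andP: (inv_ge1 _ x1) => p0 p1.
  have : 0 <= x^-1 ^+ 3 by rewrite exprn_ge0 // ltW.
  have : x^-1 ^+ 5 <= 1 by rewrite exprn_ile1 // ltW.
  lra.
- apply: (@assumption_K2_pole _ _
    (fun x => 1 - (21 - 6 * x ^+ 2 + x ^+ 4) / 8) 2 2) => //.
  + exact: biweight_phi_le1.
  + move=> x y x0 xy y1 /=.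
    have a0 : 0 <= (y - x) * (y + x) by rewrite mulr_ge0 //; lra.
    have a2 : (y - x) * (y + x) <= (y - x) * 2 by rewrite ler_pM2l; lra.
    have S0 : 0 <= x ^+ 2 + y ^+ 2 by rewrite addr_ge0 ?sqr_ge0.
    have -> : 1 - (21 - 6 * y ^+ 2 + y ^+ 4) / 8 - (1 - (21 - 6 * x ^+ 2 + x ^+ 4) / 8)
      = (y - x) * (y + x) * (6 - (x ^+ 2 + y ^+ 2)) / 8 by ring.
    nra.
  + move=> x /andP[x0 x1].
    have : x ^+ 4 <= 1 by rewrite expr_le1 //; lra.
    have := sqr_ge0 x; lra.
- exact: assumption_K3_slope biweight_phi_slope.
Qed.

End Biweight.

Section Gaussian.
Variable R : realType.
Local Notation mu := (@lebesgue_measure R).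

Lemma integral_normal_fun (s : R) : s != 0 ->
  (\int[mu]_u (normal_fun 0 s u)%:E = ((normal_peak s)^-1)%:E)%E.
Proof.
move=> s0; have k0 := lt0r_neq0 (normal_peak_gt0 s0).
transitivity (\int[mu]_u ((normal_peak s)^-1%:E * (normal_pdf 0 s u)%:E))%E.
  by apply: eq_integral => u _; rewrite normal_pdfE // -EFinM mulKf.
rewrite ge0_integralZl_EFin ?integral_normal_pdf ?mule1 ?invr_ge0 ?normal_peak_ge0 //.
- by move=> u _; rewrite lee_fin normal_pdf_ge0.
- by apply/measurable_EFinP; exact: measurable_normal_pdf.
Qed.

Lemma gaussian_kernel_mul (x u : R) :
  gaussian_kernel u * gaussian_kernel (x * u) =
  (2 * pi)^-1 * normal_fun 0 (Num.sqrt (1 + x ^+ 2))^-1 u.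
Proof.
have s0 : 0 <= 1 + x ^+ 2 by rewrite addr_ge0 ?sqr_ge0.
rewrite /gaussian_kernel /normal_fun subr0 exprVn sqr_sqrtr //.
rewrite mulrACA -invfM -expr2 sqr_sqrtr ?mulr_ge0 ?pi_ge0 // mulrC -expRD.
congr (_ * expR _); rewrite exprMn -mulr_natr; field.
by rewrite lt0r_neq0 // ltr_pwDl ?sqr_ge0.
Qed.

Lemma integral_gaussian_kernel_mul (x : R) :
  (\int[mu]_u (gaussian_kernel u * gaussian_kernel (x * u))%:E =
   ((2 * pi)^-1 * (Num.sqrt (2 * pi) / Num.sqrt (1 + x ^+ 2)))%:E)%E.
Proof.
have s0 : 0 < 1 + x ^+ 2 by rewrite ltr_pwDl ?sqr_ge0.
have s'0 : (Num.sqrt (1 + x ^+ 2))^-1 != 0 by rewrite invr_eq0 sqrtr_eq0 -ltNge.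
under eq_integral do rewrite gaussian_kernel_mul EFinM.
rewrite ge0_integralZl_EFin ?integral_normal_fun //=; last 3 first.
- by move=> u _; rewrite lee_fin normal_fun_ge0.
- by apply/measurable_EFinP; exact: measurable_normal_fun.
- by rewrite invr_ge0 mulr_ge0 ?pi_ge0.
congr (_ * _)%:E; rewrite /normal_peak invrK exprVn sqr_sqrtr ?ltW //.
have -> : (1 + x ^+ 2)^-1 * pi *+ 2 = 2 * pi * (1 + x ^+ 2)^-1.
  by rewrite -mulr_natr; ring.
by rewrite sqrtrM ?mulr_ge0 ?pi_ge0 // sqrtrV ?ltW.
Qed.

Lemma gaussian_inner (x : R) :
  L2inner (@gaussian_kernel R) (fun u => gaussian_kernel (x * u)) =
  (2 * pi)^-1 * (Num.sqrt (2 * pi) / Num.sqrt (1 + x ^+ 2)).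
Proof. by rewrite /L2inner /Rintegral integral_gaussian_kernel_mul. Qed.

Definition gaussian_ratio (x : R) := Num.sqrt 2 / Num.sqrt (1 + x ^+ 2).

Lemma gaussian_inner_ratio (x : R) :
  L2inner (@gaussian_kernel R) (fun u => gaussian_kernel (x * u)) /
  L2norm2 (@gaussian_kernel R) = gaussian_ratio x.
Proof.
rewrite L2norm2_dilate1 !gaussian_inner expr1n /gaussian_ratio.
have s0 : Num.sqrt (1 + x ^+ 2) != 0 by rewrite sqrtr_eq0 -ltNge ltr_pwDl ?sqr_ge0.
have s1 : Num.sqrt (1 + 1) != 0 :> R by rewrite sqrtr_eq0 -ltNge; lra.
have pi0 : 0 < pi :> R := pi_gt0 R.
move: (pi : R) pi0 => P P0.
have s2P : Num.sqrt (2 * P) != 0 by rewrite lt0r_neq0 ?sqrtr_gt0 ?mulr_gt0.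
by field; rewrite s0 s1 s2P lt0r_neq0.
Qed.

Lemma gaussian_phi (x : R) :
  phi (@gaussian_kernel R) x = x^-1 + (1 - 2 * gaussian_ratio x).
Proof. by rewrite /phi gaussian_inner_ratio; ring. Qed.

Lemma gaussian_ratio_ge0 (x : R) : 0 <= gaussian_ratio x.
Proof. by rewrite divr_ge0 ?sqrtr_ge0. Qed.

Lemma gaussian_ratio_sqr (x : R) : gaussian_ratio x ^+ 2 = 2 / (1 + x ^+ 2).
Proof. by rewrite expr_div_n !sqr_sqrtr ?addr_ge0 ?sqr_ge0. Qed.

Lemma gaussian_ratio_ge1 (x : R) : 0 <= x <= 1 -> 1 <= gaussian_ratio x.
Proof.
move=> /andP[x0 x1].
have s0 : 0 < Num.sqrt (1 + x ^+ 2) by rewrite sqrtr_gt0 ltr_pwDl ?sqr_ge0.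
have : x ^+ 2 <= 1 by rewrite expr_le1.
by rewrite /gaussian_ratio ler_pdivlMr // mul1r ler_sqrt; lra.
Qed.

Lemma gaussian_ratio_le2 (x : R) : gaussian_ratio x <= 2.
Proof.
have := gaussian_ratio_ge0 x; have := gaussian_ratio_sqr x.
have : 2 / (1 + x ^+ 2) <= 2.
  by rewrite ler_pdivrMr ?ltr_pwDl ?sqr_ge0 //; have := sqr_ge0 x; lra.
nra.
Qed.

Lemma gaussian_ratio_sqr_sub (x y : R) : 0 <= x -> x <= y ->
  gaussian_ratio x ^+ 2 - gaussian_ratio y ^+ 2 <= 2 * (y ^+ 2 - x ^+ 2).
Proof.
move=> x0 xy; rewrite !gaussian_ratio_sqr.
have hx : 0 < 1 + x ^+ 2 by rewrite ltr_pwDl ?sqr_ge0.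
have hy : 0 < 1 + y ^+ 2 by rewrite ltr_pwDl ?sqr_ge0.
have -> : 2 / (1 + x ^+ 2) - 2 / (1 + y ^+ 2) =
    2 * (y ^+ 2 - x ^+ 2) / ((1 + x ^+ 2) * (1 + y ^+ 2)).
  by field; rewrite !lt0r_neq0.
have d : 0 <= y ^+ 2 - x ^+ 2 by rewrite subr_ge0 ler_pXn2r ?nnegrE //; lra.
have g : 1 <= (1 + x ^+ 2) * (1 + y ^+ 2).
  by rewrite -[leLHS]mulr1 ler_pM ?lerDl ?sqr_ge0.
by rewrite ler_pdivrMr ?mulr_gt0 //; nra.
Qed.

Lemma gaussian_ratio_lipschitz (x y : R) : 0 < x -> x < y -> y <= 1 ->
  gaussian_ratio x - gaussian_ratio y <= 2 * (y - x).
Proof.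
move=> x0 xy y1.
have rx : 1 <= gaussian_ratio x by rewrite gaussian_ratio_ge1 //; lra.
have ry : 1 <= gaussian_ratio y by rewrite gaussian_ratio_ge1 //; lra.
have d := gaussian_ratio_sqr_sub x y (ltW x0) (ltW xy).
have : y ^+ 2 - x ^+ 2 <= 2 * (y - x).
  have -> : y ^+ 2 - x ^+ 2 = (y - x) * (y + x) by ring.
  by rewrite mulrC ler_pM2r; lra.
nra.
Qed.

(* sqrt (1 + x^2) / x decreases to 1 and equals sqrt 5 / 2 at x = 2, while
   (sqrt 5 / 2)^3 < sqrt 2 with little room to spare. *)
Lemma sqrt_1_add_sqr_le (x : R) : 2 <= x -> Num.sqrt (1 + x ^+ 2) <= Num.sqrt 5 / 2 * x.
Proof.
move=> x2; have c0 : 0 <= Num.sqrt 5 / 2 * x :> R by rewrite mulr_ge0 ?divr_ge0 //; lra.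
rewrite -(ger0_norm c0) -sqrtr_sqr ler_sqrt ?sqr_ge0 //.
rewrite exprMn expr_div_n sqr_sqrtr //; nra.
Qed.

Lemma half_sqrt5_cube_le_sqrt2 : (Num.sqrt 5 / 2) ^+ 3 <= Num.sqrt 2 :> R.
Proof.
rewrite -(@ler_pXn2r _ 2) ?nnegrE ?exprn_ge0 ?divr_ge0 ?sqrtr_ge0 //.
rewrite sqr_sqrtr // -exprM mulnC exprM expr_div_n sqr_sqrtr //; lra.
Qed.

Lemma sqrt_1_add_sqr_cubic_le (x y : R) : 2 <= x -> x <= y ->
  Num.sqrt (1 + x ^+ 2) * Num.sqrt (1 + y ^+ 2) *
    (Num.sqrt (1 + x ^+ 2) + Num.sqrt (1 + y ^+ 2)) <=
  Num.sqrt 2 * (x * y * (x + y)).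
Proof.
move=> x2 xy; set A := Num.sqrt (1 + x ^+ 2); set B := Num.sqrt (1 + y ^+ 2).
have Ax : A <= Num.sqrt 5 / 2 * x := sqrt_1_add_sqr_le x x2.
have By : B <= Num.sqrt 5 / 2 * y := sqrt_1_add_sqr_le y (le_trans x2 xy).
set c := Num.sqrt 5 / 2 in Ax By.
have c0 : 0 <= c by rewrite divr_ge0 ?sqrtr_ge0.
have xyz : 0 <= x * y * (x + y) by rewrite !mulr_ge0 ?addr_ge0 //; lra.
apply: (@le_trans _ _ (c ^+ 3 * (x * y * (x + y)))); last first.
  exact: ler_wpM2r half_sqrt5_cube_le_sqrt2.
have -> : c ^+ 3 * (x * y * (x + y)) = (c * x) * (c * y) * (c * x + c * y) by ring.
have AB : A * B <= (c * x) * (c * y) by apply: ler_pM; rewrite ?sqrtr_ge0.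
by apply: ler_pM; rewrite ?mulr_ge0 ?addr_ge0 ?sqrtr_ge0 ?lerD.
Qed.

Lemma gaussian_ratio_slope (x y : R) : 2 <= x -> x < y ->
  x^-1 - y^-1 <= gaussian_ratio x - gaussian_ratio y.
Proof.
move=> x2 xy; have x0 : 0 < x by lra.
have y0 : 0 < y by lra.
have ABbound := sqrt_1_add_sqr_cubic_le x y x2 (ltW xy).
rewrite /gaussian_ratio; move: ABbound.
set A := Num.sqrt (1 + x ^+ 2); set B := Num.sqrt (1 + y ^+ 2) => ABbound.
have A0 : 0 < A by rewrite sqrtr_gt0 ltr_pwDl ?sqr_ge0.
have B0 : 0 < B by rewrite sqrtr_gt0 ltr_pwDl ?sqr_ge0.
have -> : x^-1 - y^-1 = (y - x) / (x * y) by field; rewrite !lt0r_neq0.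
have -> : Num.sqrt 2 / A - Num.sqrt 2 / B =
    Num.sqrt 2 * (B ^+ 2 - A ^+ 2) / (A * B * (A + B)).
  by field; rewrite !lt0r_neq0 // addr_gt0.
rewrite !sqr_sqrtr ?addr_ge0 ?sqr_ge0 //.
rewrite ler_pdivrMr ?mulr_gt0 // mulrAC ler_pdivlMr ?mulr_gt0 ?addr_gt0 //.
have yx : 0 <= y - x by lra.
have := ler_wpM2l yx ABbound.
nra.
Qed.

Lemma gaussian_kernel_normal_pdf : @gaussian_kernel R = normal_pdf 0 1.
Proof.
apply/funext => u; rewrite normal_pdfE ?oner_neq0 // /normal_peak /normal_fun.
rewrite subr0 expr1n mul1r mulrC /gaussian_kernel.
by congr (_ / Num.sqrt _); rewrite mulr_natl.
Qed.

Lemma gaussian_assumption_K0 : assumption_K0 (@gaussian_kernel R).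
Proof.
split.
- rewrite gaussian_kernel_normal_pdf -[RHS](integral_normal_pdf 0 (1 : R)).
  by apply: eq_integral => u _; rewrite ger0_norm ?normal_pdf_ge0.
- under eq_integral => u _ do rewrite expr2 -{2}[u]mul1r.
  by rewrite integral_gaussian_kernel_mul ltry.
- by move=> x x01; rewrite gaussian_inner_ratio gaussian_ratio_ge1.
Qed.

Lemma gaussian_assumptions (EH : R) : 1 <= EH ->
  kernel_assumptions EH (@gaussian_kernel R).
Proof.
move=> EH1; split.
- exact: gaussian_assumption_K0.
- apply: (@assumption_K1_ge1 _ _ (-3)) => // x x1.
  rewrite gaussian_phi; have := gaussian_ratio_le2 x.
  by case/andP: (inv_ge1 _ x1) => p0 _; lra.
- apply: (@assumption_K2_pole _ _ (fun x => 1 - 2 * gaussian_ratio x) 4 3) => //.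
  + by move=> x _; rewrite gaussian_phi.
  + move=> x y x0 xy y1 /=; have := gaussian_ratio_lipschitz _ _ x0 xy y1; lra.
  + by move=> x _; have := gaussian_ratio_le2 x; lra.
- apply: assumption_K3_slope => x y x2 xy.
  by rewrite !gaussian_phi; have := gaussian_ratio_slope _ _ x2 xy; lra.
Qed.

End Gaussian.

Theorem lemma4 (R : realType) (EH : R) (hEH : 1 < EH) :
  [/\ kernel_assumptions EH (@gaussian_kernel R),
      kernel_assumptions EH (@rectangular_kernel R),
      kernel_assumptions EH (@epanechnikov_kernel R) &
      kernel_assumptions EH (@biweight_kernel R)].
Proof.
have EH1 := ltW hEH.
split; [exact: gaussian_assumptions | exact: rectangular_assumptions |
        exact: epanechnikov_assumptions | exact: biweight_assumptions].
Qed.
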